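(* The category of local homomorphisms is complete: every functor from a small category into it has a limit.
   Context: Rings are associative with $1$, and the zero ring $\{0\}$ (in which $1=0$) is considered a ring. A ring homomorphism $f:B\to A$ is called local if every square matrix $\alpha$ with entries in $B$ such that $f(\alpha)$ is invertible is itself invertible. The category of local homomorphisms has as objects the local ring homomorphisms $f:B\to A$, and a morphism from $f:B\to A$ to $f':B'\to A'$ is a pair of ring homomorphisms $g:B\to B'$, $h:A\to A'$ with $f'g=hf$ (a commutative square), composed componentwise. *)

(* Rings = pzRingType (associative, with 1, zero ring allowed). *)
From HB Require Import structures.
From mathcomp Require Import all_boot all_algebra.
Set Implicit Arguments. Unset Strict Implicit. Unset Printing Implicit Defensive.
Import GRing.Theory.
Local Open Scope ring_scope.

Definition mx_invertible (R : pzRingType) (n : nat) (M : 'M[R]_n) : Prop :=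
  exists N : 'M[R]_n, M *m N = 1%:M /\ N *m M = 1%:M.

Definition is_local (B A : pzRingType) (f : {rmorphism B -> A}) : Prop :=
  forall (n : nat) (M : 'M[B]_n), mx_invertible (map_mx f M) -> mx_invertible M.

Record lhom := LHom {
  lh_dom : pzRingType;
  lh_cod : pzRingType;
  lh_map : {rmorphism lh_dom -> lh_cod};
  lh_local : is_local lh_map }.

Record lmor (X Y : lhom) := LMor {
  lm_g : {rmorphism lh_dom X -> lh_dom Y};
  lm_h : {rmorphism lh_cod X -> lh_cod Y};
  lm_square : forall b, lh_map Y (lm_g b) = lm_h (lh_map X b) }.

Definition lmor_eq (X Y : lhom) (m m' : lmor X Y) : Prop :=
  lm_g m =1 lm_g m' /\ lm_h m =1 lm_h m'.

Definition lmor_is_id (X : lhom) (m : lmor X X) : Prop :=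
  lm_g m =1 id /\ lm_h m =1 id.

Definition lmor_is_comp (X Y Z : lhom) (m : lmor X Z) (g : lmor Y Z)
  (f : lmor X Y) : Prop :=
  (forall x, lm_g m x = lm_g g (lm_g f x)) /\
  (forall x, lm_h m x = lm_h g (lm_h f x)).

Record small_cat := SmallCat {
  Ob : Type;
  Hom : Ob -> Ob -> Type;
  idm : forall a, Hom a a;
  cmp : forall a b c, Hom b c -> Hom a b -> Hom a c;
  cmp_id_l : forall a b (f : Hom a b), cmp (idm b) f = f;
  cmp_id_r : forall a b (f : Hom a b), cmp f (idm a) = f;
  cmp_assoc : forall a b c d (h : Hom c d) (g : Hom b c) (f : Hom a b),
      cmp h (cmp g f) = cmp (cmp h g) f }.
Arguments idm {s} a.
Arguments cmp {s a b c}.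

Record lfunctor (J : small_cat) := LFunctor {
  Fo : Ob J -> lhom;
  Fm : forall a b : Ob J, Hom a b -> lmor (Fo a) (Fo b);
  Fm_id : forall a, lmor_is_id (Fm (idm a));
  Fm_comp : forall a b c (g : Hom b c) (f : Hom a b),
      lmor_is_comp (Fm (cmp g f)) (Fm g) (Fm f) }.
Arguments Fm {J} l {a b}.

Definition is_cone (J : small_cat) (F : lfunctor J) (L : lhom)
  (p : forall j : Ob J, lmor L (Fo F j)) : Prop :=
  forall (a b : Ob J) (f : Hom a b), lmor_is_comp (p b) (Fm F f) (p a).

Definition is_limit (J : small_cat) (F : lfunctor J) (L : lhom)
  (p : forall j : Ob J, lmor L (Fo F j)) : Prop :=
  is_cone p /\
  forall (X : lhom) (q : forall j : Ob J, lmor X (Fo F j)), is_cone q ->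
    exists u : lmor X L,
      (forall j, lmor_is_comp (q j) (p j) u) /\
      (forall u' : lmor X L, (forall j, lmor_is_comp (q j) (p j) u') ->
         lmor_eq u u').

(* The limit is computed componentwise: its domain and codomain are the rings
   of compatible families in the products of the domains and codomains, and
   the induced map is local because a square matrix over a limit of rings is
   invertible as soon as all its projections are: inverses are unique, so the
   inverses of the projections automatically form a compatible family. *)

From Pilot Require Import Defs.
From HB Require Import structures.
From mathcomp Require Import all_boot all_algebra.
From mathcomp Require Import boolp.
Set Implicit Arguments. Unset Strict Implicit. Unset Printing Implicit Defensive.
Import GRing.Theory.
Local Open Scope ring_scope.

Lemma mx_inv_uniq (R : pzRingType) n (M N1 N2 : 'M[R]_n) :
  M *m N1 = 1%:M -> N2 *m M = 1%:M -> N1 = N2.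
Proof. by move=> MN1 N2M; rewrite -[N1]mul1mx -N2M -mulmxA MN1 mulmx1. Qed.

Lemma map_mx_invertible (R S : pzRingType) (f : {rmorphism R -> S}) n (M : 'M[R]_n) :
  mx_invertible M -> mx_invertible (map_mx f M).
Proof. by case=> N [MN NM]; exists (map_mx f N); rewrite -!map_mxM MN NM map_mx1. Qed.

Section ProductRing.
Variables (I : Type) (R : I -> pzRingType).

Definition prod_ring := forall i, R i.
HB.instance Definition _ := Choice.on prod_ring.

Let zero : prod_ring := fun i => 0.
Let one : prod_ring := fun i => 1.
Let add (x y : prod_ring) : prod_ring := fun i => x i + y i.
Let opp (x : prod_ring) : prod_ring := fun i => - x i.
Let mul (x y : prod_ring) : prod_ring := fun i => x i * y i.

Let addA : associative add.
Proof. by move=> x y z; apply: functional_extensionality_dep => i; exact: addrA. Qed.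
Let addC : commutative add.
Proof. by move=> x y; apply: functional_extensionality_dep => i; exact: addrC. Qed.
Let add0 : left_id zero add.
Proof. by move=> x; apply: functional_extensionality_dep => i; exact: add0r. Qed.
Let addN : left_inverse zero opp add.
Proof. by move=> x; apply: functional_extensionality_dep => i; exact: addNr. Qed.
Let mulA : associative mul.
Proof. by move=> x y z; apply: functional_extensionality_dep => i; exact: mulrA. Qed.
Let mul1 : left_id one mul.
Proof. by move=> x; apply: functional_extensionality_dep => i; exact: mul1r. Qed.
Let mulr1 : right_id one mul.
Proof. by move=> x; apply: functional_extensionality_dep => i; exact: mulr1. Qed.
Let mulDl : left_distributive mul add.
Proof. by move=> x y z; apply: functional_extensionality_dep => i; exact: mulrDl. Qed.
Let mulDr : right_distributive mul add.
Proof. by move=> x y z; apply: functional_extensionality_dep => i; exact: mulrDr. Qed.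

HB.instance Definition _ :=
  GRing.isPzRing.Build prod_ring addA addC add0 addN mulA mul1 mulr1 mulDl mulDr.

Definition prod_proj i (x : prod_ring) : R i := x i.

Fact prod_proj_is_nmod_morphism i : nmod_morphism (prod_proj i). Proof. by []. Qed.
Fact prod_proj_is_monoid_morphism i : monoid_morphism (prod_proj i). Proof. by []. Qed.
HB.instance Definition _ i :=
  GRing.isNmodMorphism.Build prod_ring (R i) (prod_proj i) (prod_proj_is_nmod_morphism i).
HB.instance Definition _ i :=
  GRing.isMonoidMorphism.Build prod_ring (R i) (prod_proj i)
    (prod_proj_is_monoid_morphism i).

End ProductRing.

Section LimitRing.
Variables (I : Type) (H : I -> I -> Type) (R : I -> pzRingType)
  (psi : forall a b, H a b -> {rmorphism R a -> R b}).

Definition compatible : pred (prod_ring R) :=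
  fun x => `[< forall a b (f : H a b), psi f (x a) = x b >].

Fact compatible_subring_closed : subring_closed compatible.
Proof.
split.
- by apply/asboolP => a b f; exact: rmorph1.
- move=> x y /asboolP cx /asboolP cy; apply/asboolP => a b f.
  by rewrite /= rmorphB cx cy.
- move=> x y /asboolP cx /asboolP cy; apply/asboolP => a b f.
  by rewrite /= rmorphM cx cy.
Qed.

Definition lim_ring := {x : prod_ring R | compatible x}.
HB.instance Definition _ := [isSub for sval : lim_ring -> prod_ring R].
HB.instance Definition _ := [Choice of lim_ring by <:].
HB.instance Definition _ :=
  GRing.SubChoice_isSubPzRing.Build _ _ lim_ring compatible_subring_closed.

Definition lim_proj i : {rmorphism lim_ring -> R i} := (prod_proj i \o val)%FUN.

Lemma lim_projP a b (f : H a b) x : psi f (lim_proj a x) = lim_proj b x.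
Proof. exact: (asboolW (valP x)). Qed.

Lemma lim_ring_ext x y : (forall i, lim_proj i x = lim_proj i y) -> x = y.
Proof. by move=> exy; apply/val_inj/functional_extensionality_dep. Qed.

Section Lift.
Variables (S : pzRingType) (h : forall i, {rmorphism S -> R i}).
Hypothesis h_compatible : forall a b (f : H a b) s, psi f (h a s) = h b s.

Fact lim_lift_compatible s : compatible (fun i => h i s).
Proof. by apply/asboolP => a b f; exact: h_compatible. Qed.

Definition lim_lift s : lim_ring := Sub _ (lim_lift_compatible s).

Lemma lim_proj_lift i s : lim_proj i (lim_lift s) = h i s.
Proof. by []. Qed.

Fact lim_lift_is_nmod_morphism : nmod_morphism lim_lift.
Proof.
split=> [|x y]; apply: lim_ring_ext => i.
  by rewrite lim_proj_lift !rmorph0.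
by rewrite rmorphD !lim_proj_lift rmorphD.
Qed.

Fact lim_lift_is_monoid_morphism : monoid_morphism lim_lift.
Proof.
split=> [|x y]; apply: lim_ring_ext => i.
  by rewrite lim_proj_lift !rmorph1.
by rewrite rmorphM !lim_proj_lift rmorphM.
Qed.

HB.instance Definition _ :=
  GRing.isNmodMorphism.Build S lim_ring lim_lift lim_lift_is_nmod_morphism.
HB.instance Definition _ :=
  GRing.isMonoidMorphism.Build S lim_ring lim_lift lim_lift_is_monoid_morphism.

End Lift.

Lemma lim_mx_ext m n (M N : 'M[lim_ring]_(m, n)) :
  (forall i, map_mx (lim_proj i) M = map_mx (lim_proj i) N) -> M = N.
Proof.
move=> eMN; apply/matrixP => r c; apply: lim_ring_ext => i.
by have /matrixP/(_ r c) := eMN i; rewrite !mxE.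
Qed.

Lemma lim_mx_exists m n (Ns : forall i, 'M[R i]_(m, n)) :
  (forall a b (f : H a b), map_mx (psi f) (Ns a) = Ns b) ->
  exists N : 'M[lim_ring]_(m, n), forall i, map_mx (lim_proj i) N = Ns i.
Proof.
move=> Ns_compatible.
have entry_compatible r c : compatible (fun i => Ns i r c).
  by apply/asboolP => a b f; rewrite -(Ns_compatible a b f) mxE.
exists (\matrix_(r, c) Sub _ (entry_compatible r c)) => i.
by apply/matrixP => r c; rewrite !mxE.
Qed.

Lemma lim_mx_invertible n (M : 'M[lim_ring]_n) :
  (forall i, mx_invertible (map_mx (lim_proj i) M)) -> mx_invertible M.
Proof.
move=> invM; pose Ns i := sval (cid (invM i)).
have NsP i : map_mx (lim_proj i) M *m Ns i = 1%:M /\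
              Ns i *m map_mx (lim_proj i) M = 1%:M.
  exact: svalP (cid (invM i)).
have Ns_compatible a b (f : H a b) : map_mx (psi f) (Ns a) = Ns b.
  have eM : map_mx (psi f) (map_mx (lim_proj a) M) = map_mx (lim_proj b) M.
    by rewrite -map_mx_comp; apply: eq_map_mx => x; exact: lim_projP.
  apply: (@mx_inv_uniq _ _ (map_mx (lim_proj b) M)); last exact: (NsP b).2.
  by rewrite -eM -map_mxM (NsP a).1 map_mx1.
have [N NE] := lim_mx_exists Ns_compatible.
by exists N; split; apply: lim_mx_ext => i; rewrite map_mxM NE map_mx1; case: (NsP i).
Qed.

End LimitRing.

Arguments lim_proj {I H R psi} i.
Arguments lim_lift {I H R psi S} h h_compatible.

Section LocalHomLimit.
Variables (J : small_cat) (F : lfunctor J).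

Definition lim_dom := lim_ring (fun a b (f : Defs.Hom a b) => lm_g (Fm F f)).
Definition lim_cod := lim_ring (fun a b (f : Defs.Hom a b) => lm_h (Fm F f)).

Fact lim_map_compatible a b (f : Defs.Hom a b) (x : lim_dom) :
  lm_h (Fm F f) (lh_map (Fo F a) (lim_proj a x)) = lh_map (Fo F b) (lim_proj b x).
Proof. by rewrite -lm_square lim_projP. Qed.

Definition lim_map : {rmorphism lim_dom -> lim_cod} :=
  lim_lift (fun j => lh_map (Fo F j) \o lim_proj j)%FUN lim_map_compatible.

Lemma lim_map_local : is_local lim_map.
Proof.
move=> n M invM; apply: lim_mx_invertible => j; apply: lh_local.
have -> : map_mx (lh_map (Fo F j)) (map_mx (lim_proj j) M)
          = map_mx (lim_proj j) (map_mx lim_map M).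
  by rewrite -!map_mx_comp.
exact: map_mx_invertible.
Qed.

Definition lim_lhom : lhom := LHom lim_map_local.

Definition lim_cone j : lmor lim_lhom (Fo F j) :=
  @LMor lim_lhom (Fo F j) (lim_proj j) (lim_proj j) (fun x => erefl).

Lemma lim_cone_is_cone : is_cone lim_cone.
Proof. by move=> a b f; split=> x /=; rewrite lim_projP. Qed.

Section ConeLift.
Variables (X : lhom) (q : forall j, lmor X (Fo F j)).
Hypothesis q_cone : is_cone q.

Definition cone_lift_dom : {rmorphism lh_dom X -> lim_dom} :=
  lim_lift (fun j => lm_g (q j)) (fun a b f s => esym ((q_cone f).1 s)).
Definition cone_lift_cod : {rmorphism lh_cod X -> lim_cod} :=
  lim_lift (fun j => lm_h (q j)) (fun a b f s => esym ((q_cone f).2 s)).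

Lemma cone_lift_square s : lim_map (cone_lift_dom s) = cone_lift_cod (lh_map X s).
Proof. by apply: lim_ring_ext => j; exact: lm_square. Qed.

Definition cone_lift : lmor X lim_lhom := @LMor X lim_lhom _ _ cone_lift_square.

Lemma cone_lift_factors j : lmor_is_comp (q j) (lim_cone j) cone_lift.
Proof. by []. Qed.

Lemma cone_lift_unique (u : lmor X lim_lhom) :
  (forall j, lmor_is_comp (q j) (lim_cone j) u) -> lmor_eq cone_lift u.
Proof.
move=> uq; split=> x; apply: lim_ring_ext => j; [exact: (uq j).1 | exact: (uq j).2].
Qed.

End ConeLift.
End LocalHomLimit.

Theorem lemma2p5 (J : small_cat) (F : lfunctor J) :
  exists (L : lhom) (p : forall j : Ob J, lmor L (Fo F j)), is_limit p.
Proof.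
exists (lim_lhom F), (@lim_cone J F); split; first exact: lim_cone_is_cone.
move=> X q q_cone; exists (cone_lift q_cone).
by split; [exact: cone_lift_factors | exact: cone_lift_unique].
Qed.
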